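(* For every theory $\Sigma$ and formula $A \Rightarrow B$: $\Sigma \vdash A \Rightarrow B$ if and only if there is a normalized derivation sequence of $A \Rightarrow B$ using formulas in $\Sigma$.
   Context: $Y$ is a non-empty finite set of attributes and $\mathcal{T}_Y = \{y^i \mid y \in Y, i \in \mathbb{Z}\}$; $M + j = \{y^{i+j} \mid y^i \in M\}$. A formula is $A \Rightarrow B$ with $A,B$ finite subsets of $\mathcal{T}_Y$. Deduction rules (for finite $A,B,C,D,E \subseteq \mathcal{T}_Y$, $i \in \mathbb{Z}$): (Ax) infer $A \cup B \Rightarrow A$; (Cut) from $A \Rightarrow B$ and $B \cup C \Rightarrow D$ infer $A \cup C \Rightarrow D$; (Shf) from $A \Rightarrow B$ infer $A+i \Rightarrow B+i$; also (Ref) infer $A \Rightarrow A$; (Acc) from $A \Rightarrow B \cup C$ and $C \Rightarrow D \cup E$ infer $A \Rightarrow B \cup C \cup D$; (Pro) from $A \Rightarrow B \cup C$ infer $A \Rightarrow B$. $\Sigma \vdash A \Rightarrow B$ means there is a finite sequence ending with $A \Rightarrow B$ each member of which is in $\Sigma$ or follows from earlier members by (Ax), (Cut) or (Shf). A normalized derivation sequence of $A \Rightarrow B$ using formulas in $\Sigma$ is a finite sequence of formulas which (1) starts with finitely many formulas in $\Sigma$; (2) continues by formulas obtained by (Shf) applied to formulas in part (1); (3) continues by $A \Rightarrow A$; (4) continues by formulas each obtained by (Acc) whose first hypothesis is the immediately preceding formula and whose second hypothesis is a formula from part (1) or (2); (5) terminates with $A \Rightarrow B$, obtained from the immediately preceding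 formula by (Pro). *)

From HB Require Import structures.
From mathcomp Require Import all_boot all_order all_algebra.
From mathcomp Require Import finmap.
Set Implicit Arguments. Unset Strict Implicit. Unset Printing Implicit Defensive.
Import GRing.Theory Num.Theory.
Local Open Scope fset_scope.

(* Terms y^i of T_Y are pairs (y, i) with y : Y and i : int. *)
Definition term (Y : finType) := (Y * int)%type.

(* A formula A => B, with A, B finite subsets of T_Y. *)
Definition formula (Y : finType) := ({fset term Y} * {fset term Y})%type.

Definition shift_set (Y : finType) (M : {fset term Y}) (j : int) : {fset term Y} :=
  [fset ((x.1, (x.2 + j)%R) : term Y) | x in M].

Definition rule_Ax (Y : finType) (g : formula Y) : Prop :=
  exists A B : {fset term Y}, g = (A `|` B, A).

Definition rule_Cut (Y : finType) (f1 f2 g : formula Y) : Prop :=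
  exists A B C D : {fset term Y},
    [/\ f1 = (A, B), f2 = (B `|` C, D) & g = (A `|` C, D)].

Definition rule_Shf (Y : finType) (f g : formula Y) : Prop :=
  exists i : int, g = (shift_set f.1 i, shift_set f.2 i).

Definition rule_Acc (Y : finType) (f1 f2 g : formula Y) : Prop :=
  exists A B C D E : {fset term Y},
    [/\ f1 = (A, B `|` C), f2 = (C, D `|` E) & g = (A, B `|` C `|` D)].

Definition rule_Pro (Y : finType) (f g : formula Y) : Prop :=
  exists A B C : {fset term Y}, f = (A, B `|` C) /\ g = (A, B).

Definition theory (Y : finType) := formula Y -> Prop.

Definition is_derivation (Y : finType) (Sigma : theory Y) (s : seq (formula Y)) : Prop :=
  forall k, k < size s ->
    let g := nth (fset0, fset0) s k in
    [\/ Sigma g,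
        rule_Ax g,
        (exists j1 j2, [/\ j1 < k, j2 < k &
            rule_Cut (nth (fset0, fset0) s j1) (nth (fset0, fset0) s j2) g])
      | (exists j, j < k /\ rule_Shf (nth (fset0, fset0) s j) g)].

Definition provable (Y : finType) (Sigma : theory Y) (f : formula Y) : Prop :=
  exists s : seq (formula Y), s != [::] /\ is_derivation Sigma s /\
    last (fset0, fset0) s = f.

(* A normalized derivation sequence of A => B using formulas in Sigma is
   p1 ++ p2 ++ [:: A => A] ++ p4 ++ [:: A => B] with
   (1) p1 in Sigma, (2) p2 obtained by (Shf) from members of p1,
   (3) A => A, (4) p4 each by (Acc) with first hypothesis the immediately
   preceding formula and second hypothesis in p1 ++ p2,
   (5) A => B by (Pro) from the immediately preceding formula. *)
Definition normalized_derivation (Y : finType) (Sigma : theory Y)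
    (p1 p2 p4 : seq (formula Y)) (A B : {fset term Y}) : Prop :=
  [/\ (forall f, f \in p1 -> Sigma f),
      (forall g, g \in p2 -> exists2 f, f \in p1 & rule_Shf f g),
      (forall k, k < size p4 ->
         exists2 h, h \in p1 ++ p2 &
           rule_Acc (nth (A, A) ((A, A) :: p4) k) h (nth (A, A) p4 k))
    & rule_Pro (last (A, A) p4) (A, B)].

Definition has_normalized_derivation (Y : finType) (Sigma : theory Y)
    (A B : {fset term Y}) : Prop :=
  exists p1 p2 p4 : seq (formula Y), normalized_derivation Sigma p1 p2 p4 A B.

(** Proofs using (Ax), (Cut) and (Shf) can be normalized because every
    derivable formula A => B is witnessed by forward chaining: starting from
    A, repeatedly add the right-hand side of a (shifted) axiom of Sigma whose
    left-hand side is already present, until B is covered.  This property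
    holds for the axioms and for (Ax), and it is preserved by (Shf) (shift the
    whole chain) and by (Cut) (concatenate the two chains).  A chain is
    literally the (Acc) part of a normalized derivation sequence, and (Pro)
    then cuts the result down to B.  Conversely (Ref), (Acc) and (Pro) are
    derivable rules, so a normalized sequence yields a proof. *)
From mathcomp Require Import all_boot all_order all_algebra.
From mathcomp Require Import finmap.
Set Implicit Arguments. Unset Strict Implicit. Unset Printing Implicit Defensive.
Local Open Scope fset_scope.

Section Derivations.
Variable Y : finType.
Implicit Types (A B C D M X Z : {fset term Y}) (f g h : formula Y).
Local Notation x0 := ((fset0, fset0) : formula Y).

Definition shift_formula f i : formula Y := (shift_set f.1 i, shift_set f.2 i).

Variable Sigma : theory Y.

Inductive derives : formula Y -> Prop :=
| derives_Sigma f : Sigma f -> derives f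
| derives_Ax A B : derives (A `|` B, A)
| derives_Cut A B C D : derives (A, B) -> derives (B `|` C, D) -> derives (A `|` C, D)
| derives_Shf f i : derives f -> derives (shift_formula f i).

Definition derivation_step (s : seq (formula Y)) k g :=
  [\/ Sigma g, rule_Ax g,
      (exists j1 j2, [/\ j1 < k, j2 < k & rule_Cut (nth x0 s j1) (nth x0 s j2) g])
    | (exists j, j < k /\ rule_Shf (nth x0 s j) g)].

Lemma derivation_step_prefix s s' k g :
  (forall j, j < k -> nth x0 s' j = nth x0 s j) ->
  derivation_step s k g -> derivation_step s' k g.
Proof.
move=> eq_s [?|?|[j1 [j2 [lt1 lt2 Cg]]]|[j [lt Sg]]]; [exact: Or41|exact: Or42|..].
- by apply: Or43; exists j1, j2; rewrite !eq_s.
- by apply: Or44; exists j; rewrite eq_s.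
Qed.

Lemma derivation_step_catr s t k g :
  derivation_step t k g -> derivation_step (s ++ t) (size s + k) g.
Proof.
have nth_catr j : nth x0 (s ++ t) (size s + j) = nth x0 t j.
  by rewrite nth_cat ltnNge leq_addr addKn.
move=> [?|?|[j1 [j2 [lt1 lt2 Cg]]]|[j [lt Sg]]]; [exact: Or41|exact: Or42|..].
- by apply: Or43; exists (size s + j1)%N, (size s + j2)%N; rewrite !ltn_add2l !nth_catr.
- by apply: Or44; exists (size s + j)%N; rewrite ltn_add2l nth_catr.
Qed.

Lemma derivation_step_catl s t k g : k <= size s ->
  derivation_step s k g -> derivation_step (s ++ t) k g.
Proof.
by move=> le_ks; apply: derivation_step_prefix => j lt_jk; rewrite nth_cat (leq_trans lt_jk).
Qed.

Lemma is_derivation_cat s t : is_derivation Sigma s -> is_derivation Sigma t ->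
  is_derivation Sigma (s ++ t).
Proof.
move=> Ds Dt k; rewrite size_cat => lt_k.
have [lt_ks|le_sk] := ltnP k (size s).
  by rewrite /= nth_cat lt_ks; exact: derivation_step_catl (ltnW lt_ks) (Ds k lt_ks).
rewrite -(subnKC le_sk) /= nth_cat ltnNge leq_addr addKn.
by apply/derivation_step_catr/Dt; rewrite -(ltn_add2l (size s)) subnKC.
Qed.

Lemma is_derivation_rcons s g : is_derivation Sigma s ->
  derivation_step s (size s) g -> is_derivation Sigma (rcons s g).
Proof.
move=> Ds Dg k; rewrite -cats1 size_cat addn1 ltnS nth_cat leq_eqVlt.
case/orP=> [/eqP-> | lt_ks]; first by rewrite ltnn subnn; exact: derivation_step_catl.
by rewrite lt_ks; exact: derivation_step_catl (ltnW lt_ks) (Ds k lt_ks).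
Qed.

Lemma is_derivation_take n s : is_derivation Sigma s -> is_derivation Sigma (take n s).
Proof.
move=> Ds k; rewrite size_take_min leq_min => /andP [lt_kn lt_ks].
rewrite nth_take //; apply: derivation_step_prefix (Ds k lt_ks) => j lt_jk.
by rewrite nth_take // (ltn_trans lt_jk).
Qed.

Lemma provable_mem s f : is_derivation Sigma s -> f \in s -> provable Sigma f.
Proof.
move=> Ds fs; exists (take (index f s).+1 s); split; last split.
- by case: s Ds fs.
- exact: is_derivation_take.
- rewrite (last_nth x0) size_take_min (minn_idPl _) ?index_mem //=.
  by rewrite nth_take ?nth_index.
Qed.

Lemma derivation_step_mem s g f1 f2 : f1 \in s -> f2 \in s ->
  [\/ Sigma g, rule_Ax g, rule_Cut f1 f2 g | rule_Shf f1 g] ->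
  derivation_step s (size s) g.
Proof.
move=> f1s f2s; rewrite -(nth_index x0 f1s) -(nth_index x0 f2s).
move=> [?|?|Cg|Sg]; [exact: Or41|exact: Or42|..].
- by apply: Or43; exists (index f1 s), (index f2 s); rewrite !index_mem.
- by apply: Or44; exists (index f1 s); rewrite index_mem.
Qed.

Lemma derives_in_derivation f : derives f ->
  exists2 s, is_derivation Sigma s & f \in s.
Proof.
have extend s g : is_derivation Sigma s -> derivation_step s (size s) g ->
    exists2 s', is_derivation Sigma s' & g \in s'.
  move=> Ds Dg; exists (rcons s g); last by rewrite mem_rcons mem_head.
  exact: is_derivation_rcons.
elim=> [{}f Sf|A B|A B C D _ [s1 D1 in1] _ [s2 D2 in2]|{}f i _ [s Ds fs]].
- by apply: (extend [::]) => //; exact: Or41.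
- by apply: (extend [::]) => //; apply: Or42; exists A, B.
- apply: (extend _ _ (is_derivation_cat D1 D2)).
  apply: (@derivation_step_mem _ _ (A, B) (B `|` C, D)).
  + by rewrite mem_cat in1.
  + by rewrite mem_cat in2 orbT.
  + by apply: Or43; exists A, B, C, D.
- apply: (extend _ _ Ds); apply: (derivation_step_mem fs fs).
  by apply: Or44; exists i.
Qed.

Lemma derivation_derives s : is_derivation Sigma s ->
  forall k, k < size s -> derives (nth x0 s k).
Proof.
move=> Ds; elim/ltn_ind=> k IH lt_ks.
have IHlt j : j < k -> derives (nth x0 s j) by move=> lt_jk; exact/IH/(ltn_trans lt_jk).
case: (Ds k lt_ks) => [Sg|[A [B ->]]|[j1 [j2 [lt1 lt2 [A [B [C [D [e1 e2 ->]]]]]]]]|[j [lt [i ->]]]].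
- exact: derives_Sigma.
- exact: derives_Ax.
- by move: (IHlt j1 lt1) (IHlt j2 lt2); rewrite e1 e2; exact: derives_Cut.
- exact/(derives_Shf i)/IHlt.
Qed.

Lemma provableP f : provable Sigma f <-> derives f.
Proof.
split=> [[s [ne [Ds <-]]] | /derives_in_derivation [s Ds fs]].
  by case: s ne Ds => // g s _ Ds; rewrite -nth_last; exact: derivation_derives Ds _ _.
exact: provable_mem fs.
Qed.

Lemma derives_refl A : derives (A, A).
Proof. by have := derives_Ax A fset0; rewrite fsetU0. Qed.

Lemma derives_trans A X Z : derives (A, X) -> derives (X, Z) -> derives (A, Z).
Proof. by move=> dAX dXZ; have := derives_Cut (C := fset0) dAX; rewrite !fsetU0; apply. Qed.

Lemma derives_weaken A X Z : derives (A, X) -> Z `<=` X -> derives (A, Z).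
Proof.
move=> dAX /fsetUidPr sZX; apply: derives_trans dAX _.
by rewrite -sZX; exact: derives_Ax.
Qed.

Lemma derives_augment C D M : derives (C, D) -> derives (C `|` M, D `|` M).
Proof. by move=> dCD; apply: derives_Cut dCD (derives_refl _). Qed.

Lemma derives_Pro f g : derives f -> rule_Pro f g -> derives g.
Proof. by move=> df [A [B [C [ef ->]]]]; apply: derives_weaken (fsubsetUl B C); rewrite -ef. Qed.

Lemma derives_Acc f h g : derives f -> derives h -> rule_Acc f h g -> derives g.
Proof.
move=> df dh [A [B [C [D [E [ef eh ->]]]]]].
apply: derives_trans (_ : derives (A, B `|` C)) _; first by rewrite -ef.
have dC : derives (C, D) by apply: derives_weaken (fsubsetUl D E); rewrite -eh.
have := derives_augment (B `|` C) dC.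
by rewrite (fsetUidPr _ _ (fsubsetUr B C)) [D `|` _]fsetUC.
Qed.

End Derivations.

Section ForwardChaining.
Variable Y : finType.
Implicit Types (A B S M X Z : {fset term Y}) (f g h : formula Y) (H : seq (formula Y)).

Lemma shift_setU M X j : shift_set (M `|` X) j = shift_set M j `|` shift_set X j.
Proof. by rewrite /shift_set imfsetU. Qed.

Lemma shift_setS M X j : M `<=` X -> shift_set M j `<=` shift_set X j.
Proof. by move=> /fsetUidPr sMX; rewrite -sMX shift_setU fsubsetUl. Qed.

Lemma shift_set_shift M i j : shift_set (shift_set M i) j = shift_set M (i + j)%R.
Proof.
apply/fsetP=> x; apply/imfsetP/imfsetP => /=.
  by move=> [_ /imfsetP [z /= zM ->] ->]; exists z; rewrite //= GRing.addrA.
move=> [z zM ->]; exists (z.1, (z.2 + i)%R); first by apply/imfsetP; exists z.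
by rewrite /= GRing.addrA.
Qed.

Inductive acc_reach H S : {fset term Y} -> Prop :=
| acc_reach_refl : acc_reach H S S
| acc_reach_step X h :
    acc_reach H S X -> h \in H -> h.1 `<=` X -> acc_reach H S (X `|` h.2).

Lemma acc_reach_sub H S X : acc_reach H S X -> S `<=` X.
Proof. by elim=> // X' h _ sSX' _ _; exact: fsubset_trans sSX' (fsubsetUl _ _). Qed.

Lemma acc_reach_subH H H' S X : {subset H <= H'} -> acc_reach H S X -> acc_reach H' S X.
Proof.
by move=> sHH'; elim=> [|X' h _ IH hH sX']; [exact: acc_reach_refl|apply: acc_reach_step; auto].
Qed.

Lemma acc_reach_trans H S X Z : acc_reach H S X -> acc_reach H X Z -> acc_reach H S Z.
Proof. by move=> rSX; elim=> // X' h _ IH hH sX'; exact: acc_reach_step. Qed.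

Lemma acc_reach_widen H S S' X : acc_reach H S X -> S `<=` S' ->
  exists2 X', acc_reach H S' X' & X `<=` X'.
Proof.
move=> rSX sSS'; elim: rSX => [|Z h _ [X' rX' sZX'] hH shZ].
  by exists S'; first exact: acc_reach_refl.
exists (X' `|` h.2); last exact: fsetUSS.
by apply: acc_reach_step => //; exact: fsubset_trans shZ sZX'.
Qed.

Lemma acc_reach_shift H S X i : acc_reach H S X ->
  acc_reach [seq shift_formula h i | h <- H] (shift_set S i) (shift_set X i).
Proof.
elim=> [|X' h _ IH hH shX]; first exact: acc_reach_refl.
rewrite shift_setU; apply: (@acc_reach_step _ _ _ (shift_formula h i)) => //.
  exact: map_f.
exact: shift_setS.
Qed.

Variable Sigma : theory Y.

Definition shifted_axioms (p1 p2 : seq (formula Y)) : Prop :=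
  (forall f, f \in p1 -> Sigma f) /\
  (forall g, g \in p2 -> exists2 f, f \in p1 & rule_Shf f g).

Definition chain_derivable f : Prop :=
  exists p1 p2, shifted_axioms p1 p2 /\
    exists2 X, acc_reach (p1 ++ p2) f.1 X & f.2 `<=` X.

Lemma chain_derivable_Sigma f : Sigma f -> chain_derivable f.
Proof.
move=> Sf; exists [:: f], [::]; split; first by split=> // g; rewrite inE => /eqP->.
exists (f.1 `|` f.2); last exact: fsubsetUr.
by apply: acc_reach_step; [exact: acc_reach_refl|rewrite inE|].
Qed.

Lemma chain_derivable_Ax A B : chain_derivable (A `|` B, A).
Proof. by exists [::], [::]; split=> //; exists (A `|` B); [exact: acc_reach_refl|exact: fsubsetUl]. Qed.

Lemma chain_derivable_Shf f i : chain_derivable f -> chain_derivable (shift_formula f i).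
Proof.
move=> [p1 [p2 [[Sp1 Sp2] [X rX sX]]]].
exists p1, [seq shift_formula h i | h <- p1 ++ p2]; split; first split=> //.
  move=> _ /mapP [h + ->]; rewrite mem_cat => /orP [hp1|/Sp2 [f' f'p1 [j ->]]].
    by exists h => //; exists i.
  by exists f' => //; exists (j + i)%R; rewrite /shift_formula /= !shift_set_shift.
exists (shift_set X i); last exact: shift_setS.
by apply: acc_reach_subH (acc_reach_shift i rX) => h hin; rewrite mem_cat hin orbT.
Qed.

Lemma chain_derivable_Cut A B C D : chain_derivable (A, B) ->
  chain_derivable (B `|` C, D) -> chain_derivable (A `|` C, D).
Proof.
move=> [p1 [p2 [[Sp1 Sp2] [X rX sBX]]]] [q1 [q2 [[Sq1 Sq2] [Z rZ sDZ]]]] /=.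
exists (p1 ++ q1), (p2 ++ q2); split.
  split=> [f|g]; first by rewrite mem_cat => /orP [/Sp1|/Sq1].
  rewrite mem_cat => /orP [/Sp2|/Sq2] [f fp Sfg]; exists f => //; by rewrite mem_cat fp ?orbT.
have [subp subq] : {subset p1 ++ p2 <= (p1 ++ q1) ++ (p2 ++ q2)} /\
                   {subset q1 ++ q2 <= (p1 ++ q1) ++ (p2 ++ q2)}.
  by split=> h; rewrite !mem_cat => /orP [] ->; rewrite ?orbT.
have [X' rX' sXX'] := acc_reach_widen rX (fsubsetUl A C).
have sBCX' : B `|` C `<=` X'.
  rewrite fsubUset (fsubset_trans sBX sXX') /=.
  exact: fsubset_trans (fsubsetUr A C) (acc_reach_sub rX').
have [Z' rZ' sZZ'] := acc_reach_widen rZ sBCX'.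
exists Z'; last exact: fsubset_trans sDZ sZZ'.
exact: acc_reach_trans (acc_reach_subH subp rX') (acc_reach_subH subq rZ').
Qed.

Lemma derives_chain_derivable f : derives Sigma f -> chain_derivable f.
Proof.
elim=> [{}f /chain_derivable_Sigma //|A B|A B C D _ + _|{}f i _].
- exact: chain_derivable_Ax.
- exact: chain_derivable_Cut.
- exact: chain_derivable_Shf.
Qed.

Definition acc_steps H A (p4 : seq (formula Y)) : Prop :=
  forall k, k < size p4 ->
    exists2 h, h \in H & rule_Acc (nth (A, A) ((A, A) :: p4) k) h (nth (A, A) p4 k).

Lemma acc_reach_acc_steps H A X : acc_reach H A X ->
  exists2 p4, acc_steps H A p4 & last (A, A) p4 = (A, X).
Proof.
elim=> [|X' h _ [p4 steps4 last4] hH shX']; first by exists [::].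
exists (rcons p4 (A, X' `|` h.2)); last by rewrite last_rcons.
move=> k; rewrite size_rcons ltnS leq_eqVlt -rcons_cons !nth_rcons /=.
case/orP=> [/eqP-> | lt_k]; last by rewrite lt_k ltnS (ltnW lt_k); exact: steps4.
rewrite ltnn eqxx ltnSn -last_nth last4; exists h => //.
have eqX' : X' `|` h.1 = X' by apply/fsetUidPl.
by exists A, X', h.1, h.2, fset0; rewrite fsetU0 eqX'; case: h {hH shX' eqX'}.
Qed.

Lemma chain_derivable_normalized A B :
  chain_derivable (A, B) -> has_normalized_derivation Sigma A B.
Proof.
move=> [p1 [p2 [[Sp1 Sp2] [X rX sBX]]]].
have [p4 steps4 last4] := acc_reach_acc_steps rX.
exists p1, p2, p4; split=> //; rewrite last4.
by exists A, B, X; rewrite (fsetUidPr _ _ sBX).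
Qed.

Lemma shifted_axioms_derives p1 p2 h : shifted_axioms p1 p2 ->
  h \in p1 ++ p2 -> derives Sigma h.
Proof.
move=> [Sp1 Sp2]; rewrite mem_cat => /orP [/Sp1/derives_Sigma //|/Sp2 [f /Sp1 Sf [i ->]]].
exact/(derives_Shf i)/derives_Sigma.
Qed.

Lemma normalized_derivation_derives p1 p2 p4 A B :
  normalized_derivation Sigma p1 p2 p4 A B -> derives Sigma (A, B).
Proof.
move=> [Sp1 Sp2 steps4 Pro4].
have dH h : h \in p1 ++ p2 -> derives Sigma h by apply: shifted_axioms_derives.
have dprefix k : k <= size p4 -> derives Sigma (nth (A, A) ((A, A) :: p4) k).
  elim: k => [_|k IH lt_k]; first exact: derives_refl.
  have [h /dH dh Acc_k] := steps4 k lt_k.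
  exact: derives_Acc (IH (ltnW lt_k)) dh Acc_k.
by apply: derives_Pro Pro4; rewrite (last_nth (A, A)); apply: dprefix.
Qed.

End ForwardChaining.

Theorem theorem10 (Y : finType) (HY : 0 < #|Y|) (Sigma : theory Y)
    (A B : {fset term Y}) :
  provable Sigma (A, B) <-> has_normalized_derivation Sigma A B.
Proof.
rewrite provableP; split.
  by move/derives_chain_derivable; exact: chain_derivable_normalized.
by move=> [p1 [p2 [p4]]]; exact: normalized_derivation_derives.
Qed.
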